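(* Let $<_{st}$ and $<_{wk}$ be two strict partial orders on the same set $D$ such that $<_{st}$ extends $<_{wk}$. Then the following two conditions are equivalent: $( * )$ for every $k$ there exists a $<_{st}$-chain with $k$ elements which is a $<_{wk}$-antichain; $(\dagger)$ for every $k$ there exists a finite $<_{st}$-chain $X$ which is not the union of $k$ $<_{wk}$-chains. *)

From Stdlib Require Import List Arith.
Import ListNotations.

Definition strict_po {D : Type} (R : D -> D -> Prop) : Prop :=
  (forall x, ~ R x x) /\ (forall x y z, R x y -> R y z -> R x z).

Definition extends {D : Type} (R' R : D -> D -> Prop) : Prop :=
  forall x y, R x y -> R' x y.

Definition is_chain {D : Type} (R : D -> D -> Prop) (X : D -> Prop) : Prop :=
  forall x y, X x -> X y -> x <> y -> R x y \/ R y x.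

Definition is_antichain {D : Type} (R : D -> D -> Prop) (X : D -> Prop) : Prop :=
  forall x y, X x -> X y -> x <> y -> ~ R x y /\ ~ R y x.

(* Finite sets are represented by duplicate-free lists; the finite set
   underlying l is (fun x => In x l). *)
Definition fset_of {D : Type} (l : list D) : D -> Prop := fun x => In x l.

Definition union_of_k_chains {D : Type} (R : D -> D -> Prop) (k : nat) (l : list D) : Prop :=
  exists C : nat -> D -> Prop,
    (forall i, i < k -> is_chain R (C i)) /\
    (forall x, In x l <-> exists i, i < k /\ C i x).

Definition cond_star {D : Type} (st wk : D -> D -> Prop) : Prop :=
  forall k : nat, exists l : list D,
    NoDup l /\ length l = k /\ is_chain st (fset_of l) /\ is_antichain wk (fset_of l).

Definition cond_dagger {D : Type} (st wk : D -> D -> Prop) : Prop :=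
  forall k : nat, exists l : list D,
    is_chain st (fset_of l) /\ ~ union_of_k_chains wk k l.

(* ( * ) => (dagger): a set that is an antichain for <_wk meets every <_wk-chain in at most
   one point, so k+1 such points are not covered by k chains.  (dagger) => ( * ) is Dilworth's
   theorem for the finite order <_wk on the <_st-chain X: if X is not the union of k chains it
   contains an antichain of k+1 elements.  Neither direction uses that <_st is an order
   extending <_wk.

   Dilworth's theorem goes by induction on the size: remove a maximal element a and cover the
   rest by k chains.  If an antichain of size k remains, take in each chain its largest element
   lying in such an antichain; these tops form an antichain, so a lies above one of them, and
   a together with everything below that top in its chain is a chain meeting every antichain
   of size k.  Removing it leaves width k-1. *)

From Stdlib Require Import List Arith Lia Wf_nat Classical ClassicalEpsilon.
Import ListNotations.

Section Orders.

Variables (D : Type) (R : D -> D -> Prop).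

Definition width_le (X : D -> Prop) (k : nat) : Prop :=
  forall A, NoDup A -> (forall x, In x A -> X x) -> is_antichain R (fset_of A) ->
  length A <= k.

Definition chain_cover (k : nat) (C : nat -> D -> Prop) (X : D -> Prop) : Prop :=
  (forall i, i < k -> is_chain R (C i)) /\ (forall x, X x <-> exists i, i < k /\ C i x).

Lemma is_chain_incl (l l' : list D) :
  incl l' l -> is_chain R (fset_of l) -> is_chain R (fset_of l').
Proof. intros Hincl Hl x y Hx Hy. apply Hl; apply Hincl; assumption. Qed.

Lemma is_antichain_incl (l l' : list D) :
  incl l' l -> is_antichain R (fset_of l) -> is_antichain R (fset_of l').
Proof. intros Hincl Hl x y Hx Hy. apply Hl; apply Hincl; assumption. Qed.

(* Pigeonhole: an antichain meets each chain in at most one point. *)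
Lemma antichain_length_le_cover (k : nat) (C : nat -> D -> Prop) (A : list D) :
  NoDup A -> is_antichain R (fset_of A) -> (forall i, i < k -> is_chain R (C i)) ->
  (forall x, In x A -> exists i, i < k /\ C i x) -> length A <= k.
Proof.
intros HA Hanti Hchain Hcov.
set (idx := fun x => epsilon (inhabits 0) (fun i => i < k /\ C i x)).
assert (Hidx : forall x, In x A -> idx x < k /\ C (idx x) x)
  by (intros x Hx; apply epsilon_spec, Hcov, Hx).
rewrite <- (length_seq k 0), <- (length_map idx A).
apply NoDup_incl_length.
- apply NoDup_map_NoDup_ForallPairs; [|exact HA].
  intros x y Hx Hy Heq. apply NNPP; intro Hxy.
  destruct (Hidx x Hx) as [Hk Hcx]. destruct (Hidx y Hy) as [_ Hcy]. rewrite Heq in Hk, Hcx.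
  destruct (Hanti x y Hx Hy Hxy) as [Hxy' Hyx'].
  destruct (Hchain _ Hk x y Hcx Hcy Hxy); contradiction.
- intros i Hi. apply in_map_iff in Hi as [x [<- Hx]]. apply in_seq. simpl.
  pose proof (proj1 (Hidx x Hx)); lia.
Qed.

Lemma exists_antichain_of_length (X : D -> Prop) (k m : nat) :
  ~ width_le X k -> m <= S k ->
  exists A, NoDup A /\ (forall x, In x A -> X x) /\ is_antichain R (fset_of A) /\ length A = m.
Proof.
intros Hw Hm.
assert (HA : exists A, NoDup A /\ (forall x, In x A -> X x) /\ is_antichain R (fset_of A) /\
  k < length A).
{ apply NNPP; intro Hnone. apply Hw. intros A HA HAX Hanti.
  apply Nat.nlt_ge. intro Hlt. apply Hnone. exists A. tauto. }
destruct HA as [A [HA [HAX [Hanti Hlen]]]].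
pose proof (firstn_skipn m A) as Hsplit.
assert (Hincl : incl (firstn m A) A)
  by (intros x Hx; rewrite <- Hsplit; apply in_or_app; left; exact Hx).
exists (firstn m A). split; [|split; [|split]].
- rewrite <- Hsplit in HA. exact (NoDup_app_remove_r _ _ HA).
- intros x Hx. apply HAX, Hincl, Hx.
- exact (is_antichain_incl A _ Hincl Hanti).
- apply firstn_length_le. lia.
Qed.

Lemma chain_cover_add (k : nat) (C : nat -> D -> Prop) (X' K X : D -> Prop) :
  chain_cover k C X' -> is_chain R K -> (forall x, X x <-> X' x \/ K x) ->
  chain_cover (S k) (fun i y => (i < k /\ C i y) \/ (i = k /\ K y)) X.
Proof.
intros [HC Hcov] HK HS. split.
- intros i Hi x y [[Hi1 Hx]|[Hi1 Hx]] [[Hi2 Hy]|[Hi2 Hy]] Hxy; try lia.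
  + exact (HC i Hi1 x y Hx Hy Hxy).
  + exact (HK x y Hx Hy Hxy).
- intro x. rewrite HS, Hcov. split.
  + intros [[i [Hi HCi]]|HKx]; [exists i | exists k]; split; auto.
  + intros [i [Hi [[Hi' HCi]|[_ HKx]]]]; [left; exists i|right]; auto.
Qed.

Lemma chain_cover_disjoint (k : nat) (C : nat -> D -> Prop) (X : D -> Prop) :
  chain_cover k C X -> exists C', chain_cover k C' X /\
    forall i j x, C' i x -> C' j x -> i = j.
Proof.
intros [HC Hcov].
exists (fun i x => C i x /\ forall j, j < i -> ~ C j x). split; [split|].
- intros i Hi x y [Hx _] [Hy _]. exact (HC i Hi x y Hx Hy).
- intro x. rewrite Hcov. split.
  + intros [i [Hi HCi]].
    destruct (dec_inh_nat_subset_has_unique_least_element (fun j => C j x))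
      as [j [[HCj Hleast] _]]; [intro; apply classic | eauto |].
    assert (j <= i) by (apply Hleast, HCi).
    exists j. repeat split; [lia | exact HCj |].
    intros j' Hj' HCj'. specialize (Hleast j' HCj'). lia.
  + intros [i [Hi [HCi _]]]. eauto.
- intros i j x [Hi Hmi] [Hj Hmj].
  destruct (lt_eq_lt_dec i j) as [[Hlt|Heq]|Hlt];
    [exfalso; exact (Hmj i Hlt Hi) | exact Heq | exfalso; exact (Hmi j Hlt Hj)].
Qed.

Lemma max_antichain_meets_chains (k : nat) (C : nat -> D -> Prop) (X : D -> Prop) (B : list D) :
  chain_cover k C X -> NoDup B -> (forall x, In x B -> X x) ->
  is_antichain R (fset_of B) -> length B = k ->
  forall i, i < k -> exists y, In y B /\ C i y.
Proof.
intros [HC Hcov] HB HBX Hanti Hlen i Hi. apply NNPP; intro Hmiss.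
set (skip := fun j => if j <? i then j else S j).
assert (Hskip : forall j, j < k - 1 -> skip j < k /\ skip j <> i)
  by (intros j Hj; unfold skip; destruct (Nat.ltb_spec j i); lia).
enough (length B <= k - 1) by lia.
apply (antichain_length_le_cover (k - 1) (fun j => C (skip j))); auto.
- intros j Hj. apply HC, Hskip, Hj.
- intros x Hx. destruct (proj1 (Hcov x) (HBX x Hx)) as [j [Hj HCj]].
  assert (j <> i) by (intros ->; eauto).
  destruct (Nat.ltb_spec j i).
  + exists j. unfold skip. destruct (Nat.ltb_spec j i); [split; [lia | exact HCj] | lia].
  + exists (j - 1). unfold skip. destruct (Nat.ltb_spec (j - 1) i); [lia|].
    replace (S (j - 1)) with j by lia. split; [lia | exact HCj].
Qed.

Hypothesis HR : strict_po R.

Lemma exists_maximal (l : list D) (X : D -> Prop) :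
  (forall x, X x -> In x l) -> (exists x, X x) -> exists m, X m /\ forall y, X y -> ~ R m y.
Proof.
destruct HR as [Hirr Htrans].
revert X; induction l as [|h t IH]; intros X Hl [x Hx]; [destruct (Hl x Hx)|].
destruct (classic (exists y, X y /\ y <> h)) as [Hrest|Honly].
- destruct (IH (fun y => X y /\ y <> h)) as [m [[Hm Hmh] Hmax]]; [|exact Hrest|].
  { intros y [Hy Hyh]. destruct (Hl y Hy); [congruence | assumption]. }
  destruct (classic (X h /\ R m h)) as [[Hh Hmh']|Hnot].
  + exists h. split; [exact Hh|]. intros y Hy Hhy.
    assert (Hyh : y <> h) by (intros ->; exact (Hirr h Hhy)).
    exact (Hmax y (conj Hy Hyh) (Htrans _ _ _ Hmh' Hhy)).
  + exists m. split; [exact Hm|]. intros y Hy Hmy.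
    destruct (classic (y = h)) as [->|Hyh]; [tauto | exact (Hmax y (conj Hy Hyh) Hmy)].
- assert (Hh : X h) by (apply NNPP; intro Hh; apply Honly; exists x; split; congruence).
  exists h. split; [exact Hh|]. intros y Hy Hhy.
  destruct (classic (y = h)) as [->|Hyh]; [exact (Hirr h Hhy) | eauto].
Qed.

Section TopElements.

Variables (X : D -> Prop) (l : list D) (k : nat) (C : nat -> D -> Prop) (a : D).
Hypotheses (HXl : forall x, X x -> In x l) (HC : chain_cover k C X)
  (HCdisj : forall i j x, C i x -> C j x -> i = j).

Definition in_max_antichain (y : D) : Prop :=
  exists B, NoDup B /\ (forall x, In x B -> X x) /\ is_antichain R (fset_of B) /\
    length B = k /\ In y B.

Definition chain_top (i : nat) : D :=
  epsilon (inhabits a) (fun m => (C i m /\ in_max_antichain m) /\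
    forall y, C i y /\ in_max_antichain y -> ~ R m y).

Hypothesis Hmax_antichain : exists y, in_max_antichain y.

Lemma chain_top_spec (i : nat) : i < k ->
  (C i (chain_top i) /\ in_max_antichain (chain_top i)) /\
  forall y, C i y -> in_max_antichain y -> ~ R (chain_top i) y.
Proof.
intros Hi.
enough (Hex : exists m, (C i m /\ in_max_antichain m) /\
    forall y, C i y /\ in_max_antichain y -> ~ R m y)
  by (pose proof (epsilon_spec (inhabits a) _ Hex) as Htop; split; [apply Htop|];
      intros y Hy Hy'; exact (proj2 Htop y (conj Hy Hy'))).
apply (exists_maximal l).
- intros y [Hy _]. apply HXl, (proj2 (proj2 HC y)). eauto.
- destruct Hmax_antichain as [y [B [HB [HBX [Hanti [Hlen _]]]]]].
  destruct (max_antichain_meets_chains k C X B HC HB HBX Hanti Hlen i Hi) as [z [HzB HCz]].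
  exists z. split; [exact HCz|]. exists B. tauto.
Qed.

Lemma below_chain_top (i : nat) (y : D) : i < k -> C i y -> in_max_antichain y ->
  y = chain_top i \/ R y (chain_top i).
Proof.
intros Hi Hy Hy'. destruct (chain_top_spec i Hi) as [[Htop _] Hmax].
destruct (classic (y = chain_top i)) as [|Hne]; [left; assumption|right].
destruct (proj1 HC i Hi y (chain_top i) Hy Htop Hne) as [Hlt|Hgt]; [exact Hlt|].
exfalso; exact (Hmax y Hy Hy' Hgt).
Qed.

Lemma max_antichain_meets_below_top (B : list D) (i : nat) :
  NoDup B -> (forall x, In x B -> X x) -> is_antichain R (fset_of B) -> length B = k ->
  i < k -> exists y, In y B /\ C i y /\ (y = chain_top i \/ R y (chain_top i)).
Proof.
intros HB HBX Hanti Hlen Hi.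
destruct (max_antichain_meets_chains k C X B HC HB HBX Hanti Hlen i Hi) as [y [HyB HCy]].
exists y. repeat split; [exact HyB | exact HCy |].
apply below_chain_top; [exact Hi | exact HCy | exists B; tauto].
Qed.

Lemma chain_top_antichain (i j : nat) : i < k -> j < k -> i <> j ->
  ~ R (chain_top i) (chain_top j).
Proof.
intros Hi Hj Hij Hlt.
destruct (chain_top_spec j Hj) as [[_ [B [HB [HBX [Hanti [Hlen HtopB]]]]]] _].
destruct (max_antichain_meets_below_top B i HB HBX Hanti Hlen Hi) as [y [HyB [HCy Hy]]].
assert (Hyj : R y (chain_top j))
  by (destruct Hy as [->|Hy]; [exact Hlt | exact (proj2 HR _ _ _ Hy Hlt)]).
assert (Hne : y <> chain_top j).
{ intros ->. apply Hij, (HCdisj i j _ HCy), (chain_top_spec j Hj). }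
exact (proj1 (Hanti y (chain_top j) HyB HtopB Hne) Hyj).
Qed.

Hypothesis HXk : width_le X k.

Lemma exists_chain_top_below (Ha : ~ X a) (Hamax : forall y, X y -> ~ R a y)
  (HXak : width_le (fun y => X y \/ y = a) k) :
  exists i, i < k /\ R (chain_top i) a.
Proof.
apply NNPP; intro Hnone.
assert (Htop : forall i, In i (seq 0 k) -> i < k /\ C i (chain_top i) /\ X (chain_top i)).
{ intros i Hi. apply in_seq in Hi. assert (Hik : i < k) by lia.
  destruct (chain_top_spec i Hik) as [[HCi _] _].
  repeat split; [exact Hik | exact HCi | apply (proj2 HC); eauto]. }
assert (Hlen : length (a :: map chain_top (seq 0 k)) <= k).
{ apply HXak.
  - constructor.
    + intros Hin. apply in_map_iff in Hin as [i [Hi Hin]].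
      apply Ha. rewrite <- Hi. apply Htop, Hin.
    + apply NoDup_map_NoDup_ForallPairs; [|apply seq_NoDup].
      intros i j Hi Hj Heq. apply (HCdisj i j (chain_top i)); [apply Htop, Hi|].
      rewrite Heq. apply Htop, Hj.
  - intros x [<-|Hx]; [right; reflexivity | left].
    apply in_map_iff in Hx as [i [<- Hi]]. apply Htop, Hi.
  - assert (Hatop : forall j, In j (seq 0 k) -> ~ R a (chain_top j) /\ ~ R (chain_top j) a).
    { intros j Hj. split; [apply Hamax, Htop, Hj | intro; apply Hnone; exists j].
      split; [apply Htop, Hj | assumption]. }
    intros x y [<-|Hx] [<-|Hy] Hxy; [congruence | | |].
    + apply in_map_iff in Hy as [j [<- Hj]]. apply Hatop, Hj.
    + apply in_map_iff in Hx as [j [<- Hj]]. apply and_comm, Hatop, Hj.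
    + apply in_map_iff in Hx as [i [<- Hi]]. apply in_map_iff in Hy as [j [<- Hj]].
      assert (i <> j) by (intros ->; congruence).
      split; apply chain_top_antichain; auto; apply Htop; assumption. }
simpl in Hlen. rewrite length_map, length_seq in Hlen. lia.
Qed.

Definition below_top_chain (i : nat) (y : D) : Prop :=
  y = a \/ (C i y /\ (y = chain_top i \/ R y (chain_top i))).

Lemma below_top_chain_is_chain (i : nat) : i < k -> R (chain_top i) a ->
  is_chain R (below_top_chain i).
Proof.
intros Hi Htop x y [->|[Hx Hxt]] [->|[Hy Hyt]] Hxy; [congruence | right | left |].
- destruct Hyt as [->|Hyt]; [exact Htop | exact (proj2 HR _ _ _ Hyt Htop)].
- destruct Hxt as [->|Hxt]; [exact Htop | exact (proj2 HR _ _ _ Hxt Htop)].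
- exact (proj1 HC i Hi x y Hx Hy Hxy).
Qed.

Lemma width_le_remove_below_top_chain (i : nat) : i < k ->
  width_le (fun y => X y /\ ~ below_top_chain i y) (k - 1).
Proof.
intros Hi B HB HBX Hanti.
assert (Hlen : length B <= k) by (apply HXk; [exact HB | intros x Hx; apply HBX, Hx | exact Hanti]).
enough (length B <> k) by lia. intro Hlen'.
destruct (max_antichain_meets_below_top B i HB (fun x Hx => proj1 (HBX x Hx)) Hanti Hlen' Hi)
  as [y [HyB Hy]].
exact (proj2 (HBX y HyB) (or_intror Hy)).
Qed.

End TopElements.

Lemma width_le_mono (X Y : D -> Prop) (k : nat) :
  (forall x, Y x -> X x) -> width_le X k -> width_le Y k.
Proof. intros HYX HX A HA HAY. apply HX; [exact HA | intros x Hx; apply HYX, HAY, Hx]. Qed.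

Lemma exists_chain_reducing_width (l : list D) (X : D -> Prop) (k : nat) (a : D) :
  (forall x, X x -> In x l) -> width_le X (S k) -> X a -> (forall y, X y -> ~ R a y) ->
  (exists C, chain_cover (S k) C (fun y => X y /\ y <> a)) ->
  exists K, is_chain R K /\ K a /\ (forall y, K y -> X y) /\
    width_le (fun y => X y /\ ~ K y) k.
Proof.
intros HXl HXk Ha Hamax HC'.
set (X' := fun y => X y /\ y <> a).
destruct (classic (width_le X' k)) as [HX'k|HX'k].
{ exists (fun y => y = a). split; [intros x y -> -> Hxy; congruence|].
  repeat split; [intros y ->; exact Ha | apply (width_le_mono X'); [firstorder | exact HX'k]]. }
destruct HC' as [C' HC'].
destruct (chain_cover_disjoint (S k) C' X' HC') as [C [HC HCdisj]].
assert (HX'l : forall x, X' x -> In x l) by (intros x [Hx _]; apply HXl, Hx).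
assert (HX'Sk : width_le X' (S k)) by (apply (width_le_mono X); [firstorder | exact HXk]).
assert (Hmax : exists y, in_max_antichain X' (S k) y).
{ destruct (exists_antichain_of_length X' k (S k) HX'k (le_n _)) as [[|y B] HB]; [easy|].
  exists y, (y :: B). repeat (split; [apply HB|]). left; reflexivity. }
destruct (exists_chain_top_below X' l (S k) C a HX'l HC HCdisj Hmax) as [i [Hi Htop]].
{ intros [_ Haa]. exact (Haa eq_refl). }
{ intros y [Hy _]. apply Hamax, Hy. }
{ apply (width_le_mono X); [intros y [[Hy _]| ->]; assumption | exact HXk]. }
exists (below_top_chain X' (S k) C a i). repeat split.
- exact (below_top_chain_is_chain X' (S k) C a HC i Hi Htop).
- left; reflexivity.
- intros y [->|[HCy _]]; [exact Ha|]. apply (proj2 HC); eauto.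
- pose proof (width_le_remove_below_top_chain X' l (S k) C a HX'l HC Hmax HX'Sk i Hi) as HK.
  replace (S k - 1) with k in HK by lia.
  refine (width_le_mono _ _ k _ HK).
  intros y [Hy HKy]. repeat split; [exact Hy | intros ->; apply HKy; left; reflexivity | exact HKy].
Qed.

Theorem dilworth (l : list D) (X : D -> Prop) (k : nat) :
  (forall x, X x -> In x l) -> width_le X k -> exists C, chain_cover k C X.
Proof.
revert X k; induction l as [l IH] using (induction_ltof1 _ (@length D)).
intros X k HXl HXk.
destruct (classic (exists x, X x)) as [Hne|Hempty].
2:{ exists (fun _ _ => False). split; [intros i _ x y []|].
    intro x. split; [intro Hx; exfalso; eauto | intros [_ [_ []]]]. }
destruct (exists_maximal l X HXl Hne) as [a [Ha Hamax]].
destruct k as [|k].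
{ exfalso. enough (length [a] <= 0) by (simpl in *; lia).
  apply HXk; [repeat constructor; intros [] | intros x [<-|[]]; exact Ha |].
  intros x y [<-|[]] [<-|[]] Hxy; congruence. }
set (l' := remove (fun x y : D => excluded_middle_informative (x = y)) a l).
assert (Hl' : ltof _ (@length D) l' l) by (apply remove_length_lt, HXl, Ha).
assert (HX'l' : forall y, X y -> y <> a -> In y l')
  by (intros y Hy Hya; apply in_in_remove; [exact Hya | apply HXl, Hy]).
destruct (exists_chain_reducing_width l X k a HXl HXk Ha Hamax) as [K [HK [HKa [HKX HXK]]]].
{ apply (IH l' Hl'); [intros y [Hy Hya]; apply HX'l'; assumption|].
  apply (width_le_mono X); [tauto | exact HXk]. }
destruct (IH l' Hl' (fun y => X y /\ ~ K y) k) as [C HC]; [|exact HXK|].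
{ intros y [Hy HKy]. apply HX'l'; [exact Hy | intros ->; exact (HKy HKa)]. }
eexists. apply (chain_cover_add k C _ K X HC HK).
intro x. split; [intro Hx; destruct (classic (K x)); tauto | intros [[Hx _]|Hx]; auto].
Qed.

End Orders.

Theorem mainTheorem15 (D : Type) (st wk : D -> D -> Prop)
  (Hst : strict_po st) (Hwk : strict_po wk) (Hext : extends st wk) :
  cond_star st wk <-> cond_dagger st wk.
Proof.
split.
- intros Hstar k. destruct (Hstar (S k)) as [l [Hl [Hlen [Hchain Hanti]]]].
  exists l. split; [exact Hchain|]. intros [C [HC Hcov]].
  enough (length l <= k) by lia.
  apply (antichain_length_le_cover D wk k C l Hl Hanti HC). intros x Hx. apply Hcov, Hx.
- intros Hdagger k. destruct (Hdagger k) as [l [Hchain Hnot]].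
  destruct (classic (width_le D wk (fset_of l) k)) as [Hw|Hw].
  + exfalso. apply Hnot. exact (dilworth D wk Hwk l (fset_of l) k (fun x Hx => Hx) Hw).
  + destruct (exists_antichain_of_length D wk (fset_of l) k k Hw (Nat.le_succ_diag_r k))
      as [A [HA [Hincl [Hanti Hlen]]]].
    exists A. split; [exact HA|]. split; [exact Hlen|].
    split; [exact (is_chain_incl D st l A Hincl Hchain) | exact Hanti].
Qed.
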